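(* Let $N\ge1$, $\psi\in[-\pi,\pi]$, and $(w,a,\theta)\in\widetilde{\mathcal{D}}_N(\psi)$. There exists $\omega_0<0$ such that $M_{\mathrm{e}^{i\omega}}(w,a,\theta)\in\mathcal{D}_N(\psi)$ for every real $\omega$ with $\omega_0\le\omega<0$.
   Context: $P_N=\{1,\dots,N\}$; vectors are functions on $P_N$, $v^{-1}[S]=\{\ell:v_\ell\in S\}$, $\mathrm{Tr}(v,\Lambda):=\sum_{\ell\in\Lambda}v_\ell$. $\mathcal{C}:=\{z:\mathrm{Re}(z)>0\text{ or }z\in i\mathbb{R}_{>0}\}$, $\mathcal{C}^\circ$ the open right half-plane. $\mathbb{D}_N:=\{(w,a,\theta)\in\mathbb{C}\times\mathbb{C}^N\times\mathbb{R}^N:a^{-1}[0]\subseteq\theta^{-1}[\mathbb{R}\smallsetminus\mathbb{Z}]\}$, $\pi(w,a,\theta):=w-\mathrm{Tr}(a,a^{-1}[-\mathcal{C}])$, $M_\beta(w,a,\theta):=(\beta w,\beta a,\theta)$. $\widetilde{\mathcal{D}}_N:=\pi^{-1}[\mathcal{C}]$; $\mathcal{D}_N:=\{(w,a,\theta)\in\mathbb{D}_N:\pi(w,a,\theta)\in\mathcal{C}^\circ,\ a_\ell\notin i\mathbb{R}\smallsetminus\{0\}\ \forall\ell\}$. $\mathcal{D}_N(\psi):=\mathcal{D}_N\cap M_{\mathrm{e}^{i\psi}}^{-1}[\mathcal{D}_N]\cap\bigcap_{0<\mathrm{sgn}(\psi)t<|\psi|}(\pi\circ M_{\mathrm{e}^{it}})^{-1}[\mathcal{C}]$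 (so $\mathcal{D}_N(0)=\mathcal{D}_N$). For $\psi\ne0$, $\widetilde{\mathcal{D}}_N(\psi):=\bigcap_{0\le\mathrm{sgn}(\psi)t\le|\psi|}(\pi\circ M_{\mathrm{e}^{it}})^{-1}[\mathcal{C}]$, and $\widetilde{\mathcal{D}}_N(0):=\widetilde{\mathcal{D}}_N$. *)

From Stdlib Require Import Reals ZArith List ClassicalEpsilon.
From Coquelicot Require Import Coquelicot.
Open Scope R_scope.

(* Vectors on P_N = {1,...,N} are represented as functions on nat; only the
   values at indices 1 <= l <= N are ever used. *)
Definition inPN (N l : nat) : Prop := (1 <= l <= N)%nat.

Definition inCC (z : C) : Prop := Re z > 0 \/ (Re z = 0 /\ Im z > 0).
Definition inCCo (z : C) : Prop := Re z > 0.
Definition inNegCC (z : C) : Prop := inCC (Copp z).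

Definition in_iR_nonzero (z : C) : Prop := Re z = 0 /\ z <> RtoC 0.

Definition notInteger (x : R) : Prop := forall k : Z, x <> IZR k.

Definition triple : Type := (C * (nat -> C) * (nat -> R))%type.

(* Tr(v, Lambda) with Lambda = {l in P_N | P (v l)} *)
Fixpoint sum_upto (n : nat) (f : nat -> C) : C :=
  match n with
  | O => RtoC 0
  | S m => Cplus (sum_upto m f) (f n)
  end.

Definition Tr_filter (N : nat) (P : C -> Prop) (v : nat -> C) : C :=
  sum_upto N (fun l => if excluded_middle_informative (P (v l)) then v l else RtoC 0).

Definition bbD (N : nat) (x : triple) : Prop :=
  let '(w, a, th) := x in
  forall l, inPN N l -> a l = RtoC 0 -> notInteger (th l).

Definition piD (N : nat) (x : triple) : C :=
  let '(w, a, th) := x in Cminus w (Tr_filter N inNegCC a).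

Definition Mb (beta : C) (x : triple) : triple :=
  let '(w, a, th) := x in (Cmult beta w, fun l => Cmult beta (a l), th).

Definition expi (t : R) : C := (cos t, sin t).

Definition sgn (x : R) : R := if Rlt_dec 0 x then 1 else if Rlt_dec x 0 then -1 else 0.

Definition tDN (N : nat) (x : triple) : Prop := bbD N x /\ inCC (piD N x).

Definition DN (N : nat) (x : triple) : Prop :=
  bbD N x /\ inCCo (piD N x) /\
  (let '(w, a, th) := x in forall l, inPN N l -> ~ in_iR_nonzero (a l)).

Definition DNpsi (N : nat) (psi : R) (x : triple) : Prop :=
  DN N x /\ DN N (Mb (expi psi) x) /\
  (forall t, 0 < sgn psi * t < Rabs psi -> bbD N (Mb (expi t) x) /\ inCC (piD N (Mb (expi t) x))).

Definition tDNpsi (N : nat) (psi : R) (x : triple) : Prop :=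
  if Req_EM_T psi 0 then tDN N x
  else forall t, 0 <= sgn psi * t <= Rabs psi ->
         bbD N (Mb (expi t) x) /\ inCC (piD N (Mb (expi t) x)).

(* For a small negative angle s the rotation z |-> e^{is} z pushes the closed
   half-plane C into the open one: points with Re z > 0 stay there by
   continuity, and points of i R_{>0} move to the right.  Since C and -C
   partition C \ {0}, such a rotation also preserves C, preserves -C, and
   moves every nonzero point off the imaginary axis.  Consequently the index
   set a^{-1}[-C] does not change, pi(M_{e^{is}} x) = e^{is} pi(x), and
   M_{e^{is}} maps tilde-D_N into D_N for all s in some interval [s0, 0).
   Applied to x and to M_{e^{i psi}} x this gives the two endpoint conditions
   of D_N(psi); an intermediate angle t + omega either lies in the arc covered
   by the hypothesis, or within |omega| of 0 or of psi, where the endpoint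
   conditions apply. *)
From Stdlib Require Import Reals Lra Lia FunctionalExtensionality ClassicalEpsilon.
From Coquelicot Require Import Coquelicot.
Open Scope R_scope.

Lemma C_ext (z1 z2 : C) : Re z1 = Re z2 -> Im z1 = Im z2 -> z1 = z2.
Proof. destruct z1, z2; simpl; intros -> ->; reflexivity. Qed.

Lemma Re_expi_mul (s : R) (z : C) : Re (expi s * z)%C = cos s * Re z - sin s * Im z.
Proof. reflexivity. Qed.

Lemma Re_opp (z : C) : Re (- z)%C = - Re z.
Proof. reflexivity. Qed.

Lemma expi_add (s t : R) : (expi s * expi t)%C = expi (s + t).
Proof. apply C_ext; simpl; rewrite ?cos_plus, ?sin_plus; ring. Qed.

Lemma expi_0 : expi 0 = 1%C.
Proof. unfold expi; rewrite cos_0, sin_0; reflexivity. Qed.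

Lemma expi_neq_0 (t : R) : expi t <> 0%C.
Proof.
  intros H; injection H as Hc Hs.
  pose proof (sin2_cos2 t) as H1; unfold Rsqr in H1; rewrite Hc, Hs in H1; lra.
Qed.

Lemma Cmult_eq_0_l (b z : C) : b <> 0%C -> (b * z)%C = 0%C -> z = 0%C.
Proof.
  intros Hb Hbz.
  replace z with (/ b * (b * z))%C by (rewrite Cmult_assoc, Cinv_l by exact Hb; ring).
  rewrite Hbz; ring.
Qed.

Lemma inCC_trichotomy (z : C) : inCC z \/ inCC (- z)%C \/ z = 0%C.
Proof.
  destruct z as [u v]; unfold inCC; simpl.
  destruct (Rtotal_order u 0) as [Hu|[->|Hu]]; [right; left; left; lra| |left; left; lra].
  destruct (Rtotal_order v 0) as [Hv|[->|Hv]].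
  - right; left; right; split; lra.
  - right; right; reflexivity.
  - left; right; split; lra.
Qed.

Lemma inCC_not_opp (z : C) : inCC z -> ~ inCC (- z)%C.
Proof. destruct z as [u v]; unfold inCC; simpl; lra. Qed.

Lemma inCCo_inCC (z : C) : inCCo z -> inCC z.
Proof. unfold inCCo, inCC; auto. Qed.

Lemma at_left_0_of_interval (d : R) (P : R -> Prop) :
  0 < d -> (forall s, - d < s < 0 -> P s) -> at_left 0 P.
Proof.
  intros Hd HP; exists (mkposreal d Hd); intros s Hs Hneg; apply HP.
  unfold ball in Hs; simpl in Hs; unfold AbsRing_ball, abs, minus, plus, opp in Hs; simpl in Hs.
  rewrite Ropp_0, Rplus_0_r, Rabs_left in Hs by exact Hneg; lra.
Qed.

Lemma at_left_0_interval (P : R -> Prop) :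
  at_left 0 P -> exists s0, s0 < 0 /\ forall s, s0 <= s < 0 -> P s.
Proof.
  intros [[e He] HP]; exists (- e / 2); split; [lra|]; intros s Hs; apply HP; [|lra].
  unfold ball; simpl; unfold AbsRing_ball, abs, minus, plus, opp; simpl.
  rewrite Ropp_0, Rplus_0_r, Rabs_left by lra; lra.
Qed.

Lemma filter_forall_le {T : Type} {F : (T -> Prop) -> Prop} {FF : Filter F}
  (n : nat) (Q : nat -> T -> Prop) :
  (forall l, (l <= n)%nat -> F (Q l)) -> F (fun s => forall l, (l <= n)%nat -> Q l s).
Proof.
  induction n as [|n IH]; intros HQ.
  - apply (filter_imp (Q 0%nat)); [|apply HQ; lia].
    intros s Hs l Hl; replace l with 0%nat by lia; exact Hs.
  - apply (filter_imp (fun s => (forall l, (l <= n)%nat -> Q l s) /\ Q (S n) s)).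
    + intros s [Hs HSn] l Hl.
      destruct (Nat.eq_dec l (S n)) as [->|Hne]; [exact HSn | apply Hs; lia].
    + apply filter_and; [apply IH; intros l Hl; apply HQ; lia | apply HQ; lia].
Qed.

Lemma at_left_0_sin_neg : at_left 0 (fun s => sin s < 0).
Proof.
  apply (at_left_0_of_interval 1); [lra|]; intros s Hs.
  apply sin_lt_0_var; pose proof PI2_1; lra.
Qed.

Lemma at_left_0_rotate_inCCo (z : C) : inCC z -> at_left 0 (fun s => inCCo (expi s * z)%C).
Proof.
  unfold inCCo; intros [Hre|[Hre Him]].
  - set (f s := cos s * Re z - sin s * Im z).
    assert (Hf : filterlim f (locally 0) (locally (f 0))).
    { apply continuity_pt_filterlim; unfold f; reg. }
    assert (Hf0 : f 0 = Re z) by (unfold f; rewrite cos_0, sin_0; ring).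
    apply (filter_le_within _).
    apply Hf, (open_gt 0); rewrite Hf0; exact Hre.
  - apply (filter_imp (fun s => sin s < 0)); [|exact at_left_0_sin_neg].
    intros s Hs; rewrite Re_expi_mul, Hre; nra.
Qed.

Lemma at_left_0_rotate_inCC_iff (z : C) : at_left 0 (fun s => inCC (expi s * z)%C <-> inCC z).
Proof.
  destruct (inCC_trichotomy z) as [Hz|[Hz| ->]].
  - apply (filter_imp _ _ (fun s Hs => conj (fun _ => Hz) (fun _ => inCCo_inCC _ Hs))).
    exact (at_left_0_rotate_inCCo z Hz).
  - apply (filter_imp (fun s => inCCo (expi s * - z)%C)); [|exact (at_left_0_rotate_inCCo _ Hz)].
    intros s Hs; replace (expi s * - z)%C with (- (expi s * z))%C in Hs by ring.
    split; intros H.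
    + exfalso; exact (inCC_not_opp _ H (inCCo_inCC _ Hs)).
    + exfalso; apply (inCC_not_opp _ Hz); replace (- - z)%C with z by ring; exact H.
  - apply filter_forall; intros s; rewrite Cmult_0_r; tauto.
Qed.

Lemma at_left_0_rotate_not_iR (z : C) : at_left 0 (fun s => ~ in_iR_nonzero (expi s * z)%C).
Proof.
  unfold in_iR_nonzero.
  destruct (inCC_trichotomy z) as [Hz|[Hz| ->]].
  - apply (filter_imp _ _ (fun s Hs H => Rgt_not_eq _ _ Hs (proj1 H))).
    exact (at_left_0_rotate_inCCo z Hz).
  - apply (filter_imp (fun s => inCCo (expi s * - z)%C)); [|exact (at_left_0_rotate_inCCo _ Hz)].
    intros s Hs [H _]; unfold inCCo in Hs.
    replace (expi s * - z)%C with (- (expi s * z))%C in Hs by ring.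
    rewrite Re_opp in Hs; lra.
  - apply filter_forall; intros s [_ H]; apply H; rewrite Cmult_0_r; reflexivity.
Qed.

Lemma Mb_Mb (b c : C) (x : triple) : Mb b (Mb c x) = Mb (b * c) x.
Proof.
  destruct x as [[w a] th]; simpl; f_equal; f_equal; [ring|].
  apply functional_extensionality; intros l; ring.
Qed.

Lemma Mb_expi_add (s t : R) (x : triple) : Mb (expi s) (Mb (expi t) x) = Mb (expi (s + t)) x.
Proof. rewrite Mb_Mb, expi_add; reflexivity. Qed.

Lemma Mb_expi_0 (x : triple) : Mb (expi 0) x = x.
Proof.
  destruct x as [[w a] th]; rewrite expi_0; simpl; f_equal; f_equal; [ring|].
  apply functional_extensionality; intros l; ring.
Qed.

Lemma bbD_Mb (N : nat) (b : C) (x : triple) : b <> 0%C -> bbD N (Mb b x) <-> bbD N x.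
Proof.
  destruct x as [[w a] th]; simpl; intros Hb; split; intros H l Hl Ha; apply H; auto.
  - rewrite Ha; ring.
  - exact (Cmult_eq_0_l _ _ Hb Ha).
Qed.

Lemma Tr_filter_scale (N : nat) (P : C -> Prop) (b : C) (v : nat -> C) :
  (forall l, inPN N l -> (P (b * v l)%C <-> P (v l))) ->
  Tr_filter N P (fun l => b * v l)%C = (b * Tr_filter N P v)%C.
Proof.
  unfold Tr_filter, inPN; induction N as [|N IH]; intros HP; simpl; [ring|].
  rewrite IH by (intros l Hl; apply HP; lia).
  specialize (HP (S N) ltac:(lia)).
  destruct (excluded_middle_informative (P (b * v (S N))%C)),
           (excluded_middle_informative (P (v (S N)))); try tauto; ring.
Qed.

Lemma piD_Mb (N : nat) (b : C) (w : C) (a : nat -> C) (th : nat -> R) :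
  (forall l, inPN N l -> (inNegCC (b * a l)%C <-> inNegCC (a l))) ->
  piD N (Mb b (w, a, th)) = (b * piD N (w, a, th))%C.
Proof. intros Ha; simpl; rewrite Tr_filter_scale by exact Ha; unfold Cminus; ring. Qed.

Lemma at_left_0_DN (N : nat) (x : triple) : tDN N x -> at_left 0 (fun s => DN N (Mb (expi s) x)).
Proof.
  destruct x as [[w a] th]; intros [Hb Hpi].
  assert (Ha : at_left 0 (fun s => forall l, (l <= N)%nat ->
             (inNegCC (expi s * a l)%C <-> inNegCC (a l)) /\ ~ in_iR_nonzero (expi s * a l)%C)).
  { apply filter_forall_le; intros l _; apply filter_and; [|apply at_left_0_rotate_not_iR].
    unfold inNegCC; apply (filter_imp (fun s => inCC (expi s * - a l)%C <-> inCC (- a l)%C)).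
    - intros s Hs; replace (- (expi s * a l))%C with (expi s * - a l)%C by ring; exact Hs.
    - apply at_left_0_rotate_inCC_iff. }
  generalize (filter_and _ _ Ha (at_left_0_rotate_inCCo _ Hpi)); apply filter_imp.
  intros s [Hs Hps].
  split; [apply bbD_Mb; [apply expi_neq_0 | exact Hb]|split].
  - rewrite piD_Mb by (intros l [_ Hl]; apply Hs, Hl); exact Hps.
  - intros l [_ Hl]; apply Hs, Hl.
Qed.

Lemma DN_tDN (N : nat) (x : triple) : DN N x -> tDN N x.
Proof. intros [Hb [Hpi _]]; split; [exact Hb | apply inCCo_inCC, Hpi]. Qed.

Lemma sgn_mul_self (p : R) : sgn p * p = Rabs p.
Proof.
  unfold sgn; destruct (Rlt_dec 0 p); [rewrite Rabs_right by lra; ring|].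
  destruct (Rlt_dec p 0); [rewrite Rabs_left by lra; ring|].
  replace p with 0 by lra; rewrite Rabs_R0; ring.
Qed.

Lemma tDNpsi_endpoints (N : nat) (psi : R) (x : triple) :
  tDNpsi N psi x -> tDN N x /\ tDN N (Mb (expi psi) x).
Proof.
  unfold tDNpsi; destruct (Req_EM_T psi 0) as [->|_]; intros H.
  - rewrite Mb_expi_0; split; exact H.
  - pose proof (Rabs_pos psi); split.
    + rewrite <- (Mb_expi_0 x); apply H; rewrite Rmult_0_r; lra.
    + apply H; rewrite sgn_mul_self; lra.
Qed.

Lemma tDNpsi_arc (N : nat) (psi : R) (x : triple) : psi <> 0 ->
  tDNpsi N psi x -> forall t, 0 <= sgn psi * t <= Rabs psi -> tDN N (Mb (expi t) x).
Proof. unfold tDNpsi; destruct (Req_EM_T psi 0); [contradiction | auto]. Qed.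

Lemma arc_shift_cover (A : R -> Prop) (psi s0 : R) :
  (forall t, 0 <= sgn psi * t <= Rabs psi -> A t) ->
  (forall s, s0 <= s < 0 -> A s /\ A (s + psi)) ->
  forall s t, s0 <= s < 0 -> 0 < sgn psi * t < Rabs psi -> A (t + s).
Proof.
  intros Harc Hends s t Hs Ht; unfold sgn in Harc, Ht.
  destruct (Rlt_dec 0 psi) as [Hpos|Hnpos].
  - rewrite Rabs_right in Harc, Ht by lra.
    destruct (Rle_lt_dec 0 (t + s)).
    + apply Harc; lra.
    + apply Hends; lra.
  - destruct (Rlt_dec psi 0) as [Hneg|Hnneg]; [|lra].
    rewrite Rabs_left in Harc, Ht by lra.
    destruct (Rle_lt_dec psi (t + s)).
    + apply Harc; lra.
    + replace (t + s) with ((t + s - psi) + psi) by ring; apply Hends; lra.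
Qed.

Theorem lemma7 (N : nat) (psi : R) (x : triple) :
  (1 <= N)%nat -> -PI <= psi <= PI -> tDNpsi N psi x ->
  exists omega0 : R, omega0 < 0 /\
    forall omega : R, omega0 <= omega < 0 -> DNpsi N psi (Mb (expi omega) x).
Proof.
  intros _ _ Hx.
  destruct (tDNpsi_endpoints _ _ _ Hx) as [H0 Hpsi].
  destruct (at_left_0_interval _ (filter_and _ _ (at_left_0_DN _ _ H0) (at_left_0_DN _ _ Hpsi)))
    as [s0 [Hs0 Hnear]].
  exists s0; split; [exact Hs0|]; intros omega Homega.
  destruct (Hnear omega Homega) as [D0 Dpsi].
  split; [exact D0|split].
  - rewrite Mb_expi_add, Rplus_comm, <- Mb_expi_add; exact Dpsi.
  - intros t Ht; rewrite Mb_expi_add.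
    destruct (Req_dec psi 0) as [Hpsi0|Hpsi0]; [rewrite Hpsi0, Rabs_R0 in Ht; lra|].
    apply (arc_shift_cover (fun s => tDN N (Mb (expi s) x)) psi s0);
      [exact (tDNpsi_arc _ _ _ Hpsi0 Hx) | | exact Homega | exact Ht].
    intros s Hs; destruct (Hnear s Hs) as [E0 Epsi]; rewrite Mb_expi_add in Epsi.
    split; apply DN_tDN; assumption.
Qed.
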